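(* Let $A\in\mathbb{R}^{n\times n}$, $B\in\mathbb{R}^{n\times m}$, $Q=Q^T\succeq0$, $R=R^T\succ0$, and $\Gamma(X)=A^TX+XA+Q$. There exist $P\in\mathbb{R}^{n\times n}$ and a symmetric $\bar P\succ0$ such that $$\begin{bmatrix}-\Gamma(\bar P) & (P+P^T-\bar P-\bar P^T)B\\ B^T(P+P^T-\bar P-\bar P^T) & 4R\end{bmatrix}\succ0$$ if and only if $A$ is Hurwitz.
   Context: Matrix inequalities are in the Loewner sense (symmetric matrices). *)

(* Real matrices over an arbitrary real closed field R
   (covers the reals; the statement is first-order algebraic).
   Eigenvalues are taken in the algebraic closure R[i] (mathcomp-real-closed). *)
From HB Require Import structures.
From mathcomp Require Import all_boot all_order all_algebra.
From mathcomp Require Import complex.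
Set Implicit Arguments. Unset Strict Implicit. Unset Printing Implicit Defensive.
Import Order.TTheory GRing.Theory Num.Theory.
Local Open Scope ring_scope.

Definition posdef (R : realFieldType) (n : nat) (M : 'M[R]_n) : Prop :=
  M^T = M /\ forall x : 'cV[R]_n, x != 0 -> 0 < (x^T *m M *m x) 0 0.

Definition possemidef (R : realFieldType) (n : nat) (M : 'M[R]_n) : Prop :=
  M^T = M /\ forall x : 'cV[R]_n, 0 <= (x^T *m M *m x) 0 0.

Definition Gamma (R : realFieldType) (n : nat) (A Q X : 'M[R]_n) : 'M[R]_n :=
  A^T *m X + X *m A + Q.

Definition hurwitz (R : rcfType) (n : nat) (A : 'M[R]_n) : Prop :=
  forall lambda : R[i],
    eigenvalue (map_mx (fun r : R => (r%:C)%C) A) lambda -> Re lambda < 0.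

(* If A is Hurwitz, triangularise it over R[i] (Schur) and conjugate the
   triangular matrix T by diag(e^i): for small e > 0 the off-diagonal part
   becomes negligible next to the diagonal, whose entries have real parts at
   most -d < 0.  So for some invertible W the Hermitian form of W A W^-1 has
   real part at most -d |u|^2, and a large multiple Pbar of the real part of
   W^* W satisfies -Gamma(Pbar) > 0; P = Pbar then kills the off-diagonal
   blocks.  Conversely, the upper-left block -Gamma(Pbar) of a positive
   definite matrix is positive definite, and evaluating it on the real and
   imaginary parts x, y of an eigenvector for lambda gives
   2 Re(lambda) (x^T Pbar x + y^T Pbar y) < - (x^T Q x + y^T Q y) <= 0. *)

From HB Require Import structures.
From mathcomp Require Import all_boot all_order all_algebra.
From mathcomp Require Import complex sesquilinear spectral.
From mathcomp Require Import ring lra.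
Import Order.TTheory GRing.Theory Num.Theory.
Import ComplexField.Normc.
Set Implicit Arguments. Unset Strict Implicit. Unset Printing Implicit Defensive.
Local Open Scope ring_scope.
Local Open Scope sesquilinear_scope.

Local Notation form x M y := ((x^T *m M *m y) 0 0).
Local Notation hform u M := ((u^t* *m M *m u) 0 0).

Section RealForms.
Variable R : realFieldType.
Implicit Types (k : R).

Lemma form_sym n (M : 'M[R]_n) (x y : 'cV[R]_n) :
  M^T = M -> form x M y = form y M x.
Proof.
move=> MT; rewrite -[in RHS]MT -[in RHS](trmxK x) -!trmx_mul [RHS]mxE.
by rewrite mulmxA.
Qed.

Lemma form_addmx n (M N : 'M[R]_n) (x y : 'cV[R]_n) :
  form x (M + N) y = form x M y + form x N y.
Proof. by rewrite mulmxDr mulmxDl mxE. Qed.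

Lemma form_oppmx n (M : 'M[R]_n) (x y : 'cV[R]_n) : form x (- M) y = - form x M y.
Proof. by rewrite mulmxN mulNmx mxE. Qed.

Lemma form_scalemx n (M : 'M[R]_n) (x y : 'cV[R]_n) k :
  form x (k *: M) y = k * form x M y.
Proof. by rewrite -scalemxAr -scalemxAl mxE. Qed.

Lemma form_addr n (M : 'M[R]_n) (x y z : 'cV[R]_n) :
  form x M (y + z) = form x M y + form x M z.
Proof. by rewrite mulmxDr mxE. Qed.

Lemma form_oppr n (M : 'M[R]_n) (x y : 'cV[R]_n) : form x M (- y) = - form x M y.
Proof. by rewrite mulmxN mxE. Qed.

Lemma form_scaler n (M : 'M[R]_n) (x y : 'cV[R]_n) k :
  form x M (k *: y) = k * form x M y.
Proof. by rewrite -scalemxAr mxE. Qed.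

Lemma form_Gamma n (A Q P : 'M[R]_n) (x : 'cV[R]_n) : P^T = P ->
  form x (Gamma A Q P) x = 2 * form x P (A *m x) + form x Q x.
Proof.
move=> PT; rewrite !form_addmx.
have -> : form x (A^T *m P) x = form x P (A *m x).
  by rewrite mulmxA -trmx_mul form_sym.
by rewrite -!mulmxA mulmxA; ring.
Qed.

Lemma Gamma_sym n (A Q P : 'M[R]_n) : P^T = P -> Q^T = Q ->
  (Gamma A Q P)^T = Gamma A Q P.
Proof.
move=> PT QT; rewrite /Gamma !linearD /= !trmx_mul trmxK PT QT.
by rewrite [_ + A^T *m P]addrC.
Qed.

Lemma posdef_form_ge0 n (M : 'M[R]_n) (x : 'cV[R]_n) :
  posdef M -> 0 <= form x M x.
Proof.
case=> _ Mpos; have [->|/Mpos/ltW//] := eqVneq x 0.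
by rewrite mulmx0 mxE.
Qed.

Lemma posdef_formD_gt0 n m (M : 'M[R]_n) (N : 'M[R]_m) (x : 'cV[R]_n) (y : 'cV[R]_m) :
  posdef M -> posdef N -> (x != 0) || (y != 0) -> 0 < form x M x + form y N y.
Proof.
move=> Mpd Npd; have [_ Mpos] := Mpd; have [_ Npos] := Npd.
case/orP=> [/Mpos x_gt0 | /Npos y_gt0].
  by rewrite ltr_wpDr ?posdef_form_ge0.
by rewrite ltr_wpDl ?posdef_form_ge0.
Qed.

Lemma posdef_scale n k (M : 'M[R]_n) : 0 < k -> posdef M -> posdef (k *: M).
Proof.
move=> k_gt0 [MT Mpos]; split; first by rewrite linearZ /= MT.
by move=> x /Mpos x_gt0; rewrite form_scalemx mulr_gt0.
Qed.

Lemma posdef_block_diag n m (M1 : 'M[R]_n) (M2 : 'M[R]_m) :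
  posdef M1 -> posdef M2 -> posdef (block_mx M1 0 0 M2).
Proof.
move=> M1pd M2pd; have [M1T _] := M1pd; have [M2T _] := M2pd; split.
  by rewrite tr_block_mx M1T M2T !trmx0.
move=> x; rewrite -[x]vsubmxK col_mx_eq0 negb_and => x_neq0.
rewrite tr_col_mx mul_row_block !mulmx0 addr0 add0r mul_row_col mxE.
exact: posdef_formD_gt0.
Qed.

Lemma posdef_ulsubmx n m (M1 : 'M[R]_n) B C (M2 : 'M[R]_m) :
  posdef (block_mx M1 B C M2) -> posdef M1.
Proof.
case=> MT Mpos; split.
  by move: MT; rewrite tr_block_mx => /eq_block_mx[].
move=> x x_neq0; have := Mpos (col_mx x 0).
rewrite col_mx_eq0 negb_and x_neq0 => /(_ isT).
by rewrite tr_col_mx trmx0 mul_row_block !mul0mx !addr0 mul_row_col mulmx0 addr0.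
Qed.

Lemma lyapunov_Re_eigen_lt0 n (A P Q : 'M[R]_n) (x y : 'cV[R]_n) a b :
  posdef P -> possemidef Q -> posdef (- Gamma A Q P) -> (x != 0) || (y != 0) ->
  A *m x = a *: x - b *: y -> A *m y = b *: x + a *: y -> a < 0.
Proof.
move=> Ppd [_ Qpos] Gpd xy_neq0 Ax Ay; have [PT _] := Ppd.
have := posdef_formD_gt0 Gpd Gpd xy_neq0.
have := posdef_formD_gt0 Ppd Ppd xy_neq0.
have := Qpos x; have := Qpos y.
rewrite !form_oppmx !form_Gamma // Ax Ay form_addr form_oppr form_addr.
rewrite !form_scaler (form_sym y x PT).
move: (form x P x) (form y P y) (form x Q x) (form y Q y) (form y P x).
by move=> pxx pyy qxx qyy pxy; nra.
Qed.

Lemma lyapunov_of_dissipative n (A G Q : 'M[R]_n) d c :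
  posdef G -> possemidef Q -> 0 < d -> 0 <= c ->
  (forall x : 'cV[R]_n, form x G (A *m x) <= - d * form x G x) ->
  (forall x : 'cV[R]_n, form x Q x <= c * form x G x) ->
  exists P, posdef P /\ posdef (- Gamma A Q P).
Proof.
move=> Gpd [QT _] d_gt0 c_ge0 AG QG; have [GT Gpos] := Gpd.
pose k := (c + 1) / (2 * d).
have kd : 2 * d * k = c + 1 by rewrite mulrC divfK // mulf_neq0 ?lt0r_neq0.
have k_gt0 : 0 < k by rewrite divr_gt0 ?mulr_gt0 // ltr_wpDl.
exists (k *: G); split; first exact: posdef_scale.
split.
  by rewrite linearN /= Gamma_sym // linearZ /= GT.
move=> x /Gpos g_gt0; rewrite form_oppmx form_Gamma; last by rewrite linearZ /= GT.
rewrite form_scalemx.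
have := AG x; have := QG x.
move: (form x G (A *m x)) (form x Q x) (form x G x) g_gt0 => gAx qx g.
nra.
Qed.

End RealForms.

Section ComplexForms.
Variable R : rcfType.
Local Notation C := R[i].
Local Notation toC := (real_complex R).

Lemma normCE (z : C) : `|z| = toC (normc z).
Proof. by []. Qed.

Lemma normc_ge0 (z : C) : 0 <= normc z.
Proof. by case: z => a b; apply: sqrtr_ge0. Qed.

Lemma normc_conj (z : C) : normc z^* = normc z.
Proof. by case: z => a b; rewrite /normc /= sqrrN. Qed.

Lemma normc_real (r : R) : normc (toC r) = `|r|.
Proof. by rewrite /normc /= expr0n addr0 sqrtr_sqr. Qed.

Lemma normc_sum (I : finType) (f : I -> C) :
  normc (\sum_i f i) <= \sum_i normc (f i).
Proof. by rewrite -lecR -normCE rmorph_sum; apply: ler_norm_sum. Qed.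

Lemma Re_le_normc (z : C) : complex.Re z <= normc z.
Proof.
by apply: le_trans (ler_norm (complex.Re z)) _; rewrite -lecR -normCE normc_ge_Re.
Qed.

Lemma mulCJ_normc (z : C) : z^* * z = toC (normc z ^+ 2).
Proof. by rewrite -normCKC rmorphXn. Qed.

Lemma ReD (z w : C) : complex.Re (z + w) = complex.Re z + complex.Re w.
Proof. by case: z; case: w. Qed.

Lemma Re_realM (r : R) (z : C) : complex.Re (toC r * z) = r * complex.Re z.
Proof. by case: z => a b /=; rewrite mul0r subr0. Qed.

Lemma Re_mulrR (z : C) (r : R) : complex.Re (z * toC r) = complex.Re z * r.
Proof. by rewrite mulrC Re_realM mulrC. Qed.

Lemma Im_realM (r : R) (z : C) : complex.Im (toC r * z) = r * complex.Im z.
Proof. by case: z => a b /=; rewrite mul0r addr0. Qed.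

Definition sqnorm n (u : 'cV[C]_n) : R := \sum_i normc (u i 0) ^+ 2.

Definition mxnormc m n (M : 'M[C]_(m, n)) : R := \sum_i \sum_j normc (M i j).

Lemma sqnorm_ge0 n (u : 'cV[C]_n) : 0 <= sqnorm u.
Proof. by apply: sumr_ge0 => i _; apply: sqr_ge0. Qed.

Lemma sqnorm_ge n (u : 'cV[C]_n) i : normc (u i 0) ^+ 2 <= sqnorm u.
Proof. by rewrite /sqnorm (bigD1 i) //= lerDl sumr_ge0 // => j _; apply: sqr_ge0. Qed.

Lemma sqnorm_gt0 n (u : 'cV[C]_n) : u != 0 -> 0 < sqnorm u.
Proof.
move=> u_neq0; have [i ui_neq0] : exists i, u i 0 != 0.
  apply/existsP; apply: contraR u_neq0 => /existsPn u0.
  by apply/eqP/matrixP => i j; rewrite ord1 mxE; apply/eqP/negbNE/u0.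
apply: lt_le_trans (sqnorm_ge u i); rewrite exprn_gt0 // lt_neqAle normc_ge0 andbT.
by apply: contra ui_neq0 => /eqP/esym/eq0_normc->.
Qed.

Lemma mxnormc_ge0 m n (M : 'M[C]_(m, n)) : 0 <= mxnormc M.
Proof. by do 2![apply: sumr_ge0 => ? _]; apply: normc_ge0. Qed.

Lemma tcmx_mulmx_self n (u : 'cV[C]_n) : (u^t* *m u) 0 0 = toC (sqnorm u).
Proof.
rewrite mxE rmorph_sum; apply: eq_bigr => i _.
by rewrite !mxE mulCJ_normc.
Qed.

Lemma hform_sum n (u v : 'cV[C]_n) (M : 'M[C]_n) :
  (u^t* *m M *m v) 0 0 = \sum_i \sum_j (u i 0)^* * M i j * v j 0.
Proof.
rewrite mxE; under eq_bigr do rewrite mxE big_distrl /=.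
rewrite exchange_big /=; apply: eq_bigr => i _; apply: eq_bigr => j _.
by rewrite !mxE.
Qed.

Lemma hformD n (u : 'cV[C]_n) (M N : 'M[C]_n) :
  hform u (M + N) = hform u M + hform u N.
Proof. by rewrite mulmxDr mulmxDl mxE. Qed.

Lemma normc_hform_le n (u : 'cV[C]_n) (M : 'M[C]_n) :
  normc (hform u M) <= mxnormc M * sqnorm u.
Proof.
rewrite hform_sum mulr_suml; apply: le_trans (normc_sum _) _.
apply: ler_sum => i _; rewrite mulr_suml; apply: le_trans (normc_sum _) _.
apply: ler_sum => j _; rewrite !normcM normc_conj.
have := sqnorm_ge u i; have := sqnorm_ge u j.
have := normc_ge0 (u i 0); have := normc_ge0 (u j 0); have := normc_ge0 (M i j).
move: (normc (u i 0)) (normc (u j 0)) (normc (M i j)) (sqnorm u) => a b c s.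
move=> c_ge0 b_ge0 a_ge0 b2s a2s; have ab_le : a * b <= s by nra.
by rewrite mulrAC [c * s]mulrC ler_wpM2r.
Qed.

Lemma Re_hform_diag n (u : 'cV[C]_n) (r : 'I_n -> C) :
  complex.Re (hform u (diag_mx (\row_i r i))) =
  \sum_i complex.Re (r i) * normc (u i 0) ^+ 2.
Proof.
rewrite hform_sum raddf_sum; apply: eq_bigr => i _.
rewrite (bigD1 i) //= big1 ?addr0 => [|j /negPf ji]; last first.
  by rewrite !mxE eq_sym ji mulr0n mulr0 mul0r.
by rewrite !mxE eqxx mulr1n mulrAC mulCJ_normc Re_realM mulrC.
Qed.

Definition offdiag n (M : 'M[C]_n) := M - diag_mx (\row_i M i i).

Lemma Re_hform_le_diag n (u : 'cV[C]_n) (M : 'M[C]_n) :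
  complex.Re (hform u M) <=
  \sum_i complex.Re (M i i) * normc (u i 0) ^+ 2 + mxnormc (offdiag M) * sqnorm u.
Proof.
rewrite -(Re_hform_diag u (fun i => M i i)).
have -> : hform u M = hform u (diag_mx (\row_i M i i)) + hform u (offdiag M).
  by rewrite -hformD /offdiag addrC subrK.
by rewrite ReD lerD2l; apply: le_trans (Re_le_normc _) (normc_hform_le _ _).
Qed.

Lemma trigonalizable n (M : 'M[C]_n) :
  exists2 S, S \in unitmx & is_trig_mx (conjmx S M).
Proof.
case: n M => [|n] M.
  by exists 1%:M; [rewrite unitmx1 | apply/is_trig_mxP => -[]].
have [S Su MS] := Schur M isT.
by exists S => //; apply: unitarymx_unit.
Qed.

Lemma eigenvalue_trig_diag n (T : 'M[C]_n) i : is_trig_mx T -> eigenvalue T (T i i).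
Proof.
move=> Tt; rewrite eigenvalue_root_char char_poly_trig // /root horner_prod.
by apply/prodf_eq0; exists i => //; rewrite hornerXsubC subrr.
Qed.

Definition geom_diag {n} (e : R) : 'M[C]_n := diag_mx (\row_i toC (e ^+ i)).

(* Since [is_trig_mx] means lower triangular, the factor e^(i-j) shrinks every
   nonzero off-diagonal entry by at least e when 0 < e <= 1. *)
Definition rescale n e (T : 'M[C]_n) : 'M[C]_n :=
  \matrix_(i, j) (toC (e ^+ i / e ^+ j) * T i j).

Lemma geom_diag_mulmx n e (T : 'M[C]_n) : e != 0 ->
  geom_diag e *m T = rescale e T *m geom_diag e.
Proof.
move=> e_neq0; apply/matrixP => i j; rewrite mul_diag_mx mul_mx_diag !mxE.
by rewrite mulrAC -rmorphM /= divfK // expf_neq0.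
Qed.

Lemma geom_diag_unit n e : e != 0 -> (geom_diag e : 'M[C]_n) \in unitmx.
Proof.
move=> e_neq0; rewrite unitmxE det_diag unitfE; apply/prodf_neq0 => i _.
by rewrite mxE fmorph_eq0 expf_neq0.
Qed.

Lemma mxnormc_offdiag_rescale n e (T : 'M[C]_n) : is_trig_mx T -> 0 < e <= 1 ->
  mxnormc (offdiag (rescale e T)) <= e * mxnormc T.
Proof.
move=> /is_trig_mxP Tt /andP[e_gt0 e_le1].
rewrite /mxnormc mulr_sumr; apply: ler_sum => i _.
rewrite mulr_sumr; apply: ler_sum => j _; rewrite !mxE.
have [ij|ji|/val_inj->] := ltngtP i j.
- by rewrite Tt // mulr0 -val_eqE (ltn_eqF ij) mulr0n subr0 normc0 mulr0.
- rewrite eq_sym -val_eqE (ltn_eqF ji) mulr0n subr0 normcM normc_real.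
  apply: ler_wpM2r; first exact: normc_ge0.
  rewrite -expfB // ger0_norm; last by rewrite exprn_ge0 // ltW.
  rewrite -(subnSK ji) exprS -[leRHS]mulr1 ler_wpM2l ?(ltW e_gt0) //.
  by rewrite exprn_ile1 // ltW.
- by rewrite eqxx mulr1n subrr normc0 mulr_ge0 ?normc_ge0 // ltW.
Qed.

Lemma Re_hform_rescale_trig n e (T : 'M[C]_n) (u : 'cV[C]_n) :
  is_trig_mx T -> 0 < e <= 1 ->
  complex.Re (hform u (rescale e T)) <=
  \sum_i complex.Re (T i i) * normc (u i 0) ^+ 2 + e * mxnormc T * sqnorm u.
Proof.
move=> Tt e01; apply: le_trans (Re_hform_le_diag _ _) _.
have diagE i : rescale e T i i = T i i.
  by rewrite mxE divff ?rmorph1 ?mul1r // expf_neq0 // lt0r_neq0; case/andP: e01.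
under eq_bigr do rewrite diagE.
by rewrite lerD2l ler_wpM2r ?sqnorm_ge0 ?mxnormc_offdiag_rescale.
Qed.

Lemma trig_rescale_dissipative n (T : 'M[C]_n) d :
  is_trig_mx T -> 0 < d -> (forall i, d <= - complex.Re (T i i)) ->
  exists2 e, 0 < e &
    forall u, complex.Re (hform u (rescale e T)) <= - (d / 2) * sqnorm u.
Proof.
move=> Tt d_gt0 d_le; have tau_ge0 := mxnormc_ge0 T.
pose e := d / (2 * (mxnormc T + d)).
have e_gt0 : 0 < e by rewrite divr_gt0 ?mulr_gt0 ?ltr_wpDl.
have e_le1 : e <= 1 by rewrite ler_pdivrMr ?mulr_gt0 ?ltr_wpDl //; lra.
have e_tau : e * mxnormc T <= d / 2.
  by rewrite mulrAC ler_pdivrMr ?mulr_gt0 ?ltr_wpDl //; nra.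
exists e => // u.
apply: le_trans (Re_hform_rescale_trig u Tt _) _; first by rewrite e_gt0.
have : \sum_i complex.Re (T i i) * normc (u i 0) ^+ 2 <= - d * sqnorm u.
  rewrite /sqnorm mulr_sumr; apply: ler_sum => i _.
  by rewrite ler_wpM2r ?sqr_ge0 // lerNr.
have := sqnorm_ge0 u; nra.
Qed.

Lemma hurwitz_dissipative_similar n (A : 'M[R]_n) : hurwitz A ->
  exists W T (d : R), [/\ W \in unitmx, W *m map_mx toC A = T *m W, 0 < d &
    forall u, complex.Re (hform u T) <= - d * sqnorm u].
Proof.
move=> hA; have [S Su Tt] := trigonalizable (map_mx toC A).
set T := conjmx S _ in Tt.
have TS : T *m S = S *m map_mx toC A by rewrite /T conjumx // mulmxKV.
have ReT_lt0 i : complex.Re (T i i) < 0.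
  have /hA := eigenvalue_conjmx (stablemx_unit _ Su) (etrans (row_free_unit S) Su)
                (eigenvalue_trig_diag i Tt).
  by rewrite -complexRe -(rmorph0 toC) ltcR.
pose d := \big[Num.min/1]_i (- complex.Re (T i i)).
have d_gt0 : 0 < d.
  apply: (big_ind (fun x => 0 < x)) => // [x y x_gt0 y_gt0 | i _].
    by rewrite lt_min x_gt0.
  by rewrite oppr_gt0.
have d_le i : d <= - complex.Re (T i i) by apply: bigmin_le.
have [e e_gt0 Tdiss] := trig_rescale_dissipative Tt d_gt0 d_le.
exists (geom_diag e *m S), (rescale e T), (d / 2); split => //.
- by rewrite unitmx_mul geom_diag_unit ?lt0r_neq0.
- rewrite -mulmxA -TS mulmxA [geom_diag e *m T]geom_diag_mulmx ?lt0r_neq0 //.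
  by rewrite mulmxA.
- by rewrite divr_gt0.
Qed.

Definition gram n (W : 'M[C]_n) : 'M[R]_n := map_mx (@complex.Re R) (W^t* *m W).

Lemma form_map_Re n (M : 'M[C]_n) (x y : 'cV[R]_n) :
  form x (map_mx (@complex.Re R) M) y =
  complex.Re (form (map_mx toC x) M (map_mx toC y)).
Proof.
rewrite mxE [in RHS]mxE raddf_sum /=; apply: eq_bigr => j _.
rewrite [(map_mx _ y) _ _]mxE Re_mulrR !mxE raddf_sum /=; congr (_ * _).
by apply: eq_bigr => i _; rewrite !mxE Re_realM.
Qed.

Lemma tcmx_map_real m n (X : 'M[R]_(m, n)) : (map_mx toC X)^t* = (map_mx toC X)^T.
Proof. by apply/matrixP => i j; rewrite !mxE conj_Creal // complex_real. Qed.

Lemma gram_form n (W : 'M[C]_n) (x y : 'cV[R]_n) :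
  form x (gram W) y = complex.Re (((W *m map_mx toC x)^t* *m (W *m map_mx toC y)) 0 0).
Proof. by rewrite form_map_Re trmx_mul map_mxM tcmx_map_real !mulmxA. Qed.

Lemma gram_form_self n (W : 'M[C]_n) (x : 'cV[R]_n) :
  form x (gram W) x = sqnorm (W *m map_mx toC x).
Proof. by rewrite gram_form tcmx_mulmx_self. Qed.

Lemma gram_sym n (W : 'M[C]_n) : (gram W)^T = gram W.
Proof.
apply/matrixP => i j; rewrite !mxE !raddf_sum /=; apply: eq_bigr => l _.
by rewrite !mxE mulrC -[in RHS](conjCK (W l j)) -rmorphM; case: (_ * _).
Qed.

Lemma gram_posdef n (W : 'M[C]_n) : W \in unitmx -> posdef (gram W).
Proof.
move=> Wu; split=> [|x x_neq0]; first exact: gram_sym.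
rewrite gram_form_self sqnorm_gt0 //; apply: contra x_neq0 => /eqP Wx0.
by rewrite -(map_mx_eq0 toC) -(mulKmx Wu (map_mx toC x)) Wx0 mulmx0.
Qed.

Lemma gram_dominates n (W : 'M[C]_n) (M : 'M[R]_n) : W \in unitmx ->
  exists2 c, 0 <= c & forall x : 'cV[R]_n, form x M x <= c * form x (gram W) x.
Proof.
move=> Wu; pose M' := (invmx W)^t* *m map_mx toC M *m invmx W.
exists (mxnormc M') => [|x]; first exact: mxnormc_ge0.
have -> : form x M x = complex.Re (hform (W *m map_mx toC x) M').
  have {1}-> : M = map_mx (@complex.Re R) (map_mx toC M).
    by apply/matrixP => i j; rewrite !mxE.
  rewrite form_map_Re -tcmx_map_real -[in LHS](mulKmx Wu (map_mx toC x)).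
  by rewrite trmx_mul map_mxM !mulmxA.
by rewrite gram_form_self; apply: le_trans (Re_le_normc _) (normc_hform_le _ _).
Qed.

Lemma gram_dissipative n (A : 'M[R]_n) (W T : 'M[C]_n) d :
  W *m map_mx toC A = T *m W ->
  (forall u : 'cV[C]_n, complex.Re (hform u T) <= - d * sqnorm u) ->
  forall x : 'cV[R]_n, form x (gram W) (A *m x) <= - d * form x (gram W) x.
Proof.
move=> WA Tdiss x; rewrite gram_form gram_form_self.
have -> : map_mx toC (A *m x) = map_mx toC A *m map_mx toC x by rewrite map_mxM.
by rewrite mulmxA WA; have := Tdiss (W *m map_mx toC x); rewrite !mulmxA.
Qed.

Lemma lyapunov_of_hurwitz n (A Q : 'M[R]_n) : hurwitz A -> possemidef Q ->
  exists P, posdef P /\ posdef (- Gamma A Q P).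
Proof.
move=> hA Qpsd.
have [W [T [d [Wu WA d_gt0 Tdiss]]]] := hurwitz_dissipative_similar hA.
have [c c_ge0 QG] := gram_dominates Q Wu.
exact: lyapunov_of_dissipative (gram_posdef Wu) Qpsd d_gt0 c_ge0
  (gram_dissipative WA Tdiss) QG.
Qed.

(* [eigenvalue] is defined through row eigenvectors [v *m M = l *: v]. *)
Lemma eigenvalue_col n (M : 'M[C]_n) l : eigenvalue M l ->
  exists2 z : 'cV[C]_n, z != 0 & M *m z = l *: z.
Proof.
move=> /eigenvalueP[v vM v_neq0].
have : \det (M - l%:M) == 0.
  by apply/det0P; exists v; rewrite // mulmxBr vM mul_mx_scalar subrr.
rewrite -det_tr => /det0P[w w_neq0 wM]; exists w^T; first by rewrite trmx_eq0.
apply/eqP; rewrite -subr_eq0 -mul_scalar_mx -mulmxBl -trmx_eq0.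
by rewrite trmx_mul trmxK wM.
Qed.

Lemma map_Re_real_mulmx m n (A : 'M[R]_(m, n)) (z : 'cV[C]_n) :
  map_mx (@complex.Re R) (map_mx toC A *m z) = A *m map_mx (@complex.Re R) z.
Proof.
apply/matrixP => i j; rewrite !mxE raddf_sum /=; apply: eq_bigr => k _.
by rewrite !mxE Re_realM.
Qed.

Lemma map_Im_real_mulmx m n (A : 'M[R]_(m, n)) (z : 'cV[C]_n) :
  map_mx (@complex.Im R) (map_mx toC A *m z) = A *m map_mx (@complex.Im R) z.
Proof.
apply/matrixP => i j; rewrite !mxE raddf_sum /=; apply: eq_bigr => k _.
by rewrite !mxE Im_realM.
Qed.

Lemma map_Re_scale n (l : C) (z : 'cV[C]_n) :
  map_mx (@complex.Re R) (l *: z) =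
  complex.Re l *: map_mx (@complex.Re R) z - complex.Im l *: map_mx (@complex.Im R) z.
Proof. by apply/matrixP => i j; rewrite !mxE; case: l; case: (z i j). Qed.

Lemma map_Im_scale n (l : C) (z : 'cV[C]_n) :
  map_mx (@complex.Im R) (l *: z) =
  complex.Im l *: map_mx (@complex.Re R) z + complex.Re l *: map_mx (@complex.Im R) z.
Proof.
by apply/matrixP => i j; rewrite !mxE; case: l; case: (z i j) => * /=; rewrite addrC.
Qed.

Lemma map_Re_Im_neq0 n (z : 'cV[C]_n) : z != 0 ->
  (map_mx (@complex.Re R) z != 0) || (map_mx (@complex.Im R) z != 0).
Proof.
apply: contraR; rewrite negb_or !negbK => /andP[/eqP Re0 /eqP Im0].
apply/eqP/matrixP => i j.
move/matrixP/(_ i j): Re0; move/matrixP/(_ i j): Im0; rewrite !mxE.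
by case: (z i j) => a b /= -> ->.
Qed.

Lemma hurwitz_of_lyapunov n (A P Q : 'M[R]_n) :
  posdef P -> possemidef Q -> posdef (- Gamma A Q P) -> hurwitz A.
Proof.
move=> Ppd Qpsd Gpd l /eigenvalue_col[z z_neq0 Az].
rewrite -complexRe -(rmorph0 toC) ltcR.
apply: (lyapunov_Re_eigen_lt0 Ppd Qpsd Gpd (map_Re_Im_neq0 z_neq0)).
  by rewrite -map_Re_real_mulmx Az map_Re_scale.
by rewrite -map_Im_real_mulmx Az map_Im_scale.
Qed.

End ComplexForms.

Theorem theorem5 (R : rcfType) (n m : nat)
  (A : 'M[R]_n) (B : 'M[R]_(n, m)) (Q : 'M[R]_n) (Rm : 'M[R]_m) :
  possemidef Q -> posdef Rm ->
  ((exists (P Pbar : 'M[R]_n),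
      posdef Pbar /\
      posdef (block_mx (- Gamma A Q Pbar) ((P + P^T - Pbar - Pbar^T) *m B)
                       (B^T *m (P + P^T - Pbar - Pbar^T)) (4%:R *: Rm)))
   <-> hurwitz A).
Proof.
move=> Qpsd Rmpd; split.
  by case=> P [Pbar [Pbar_pd /posdef_ulsubmx]]; apply: hurwitz_of_lyapunov.
move=> /lyapunov_of_hurwitz /(_ Qpsd)[Pbar [Pbar_pd Gpd]].
exists Pbar, Pbar; split=> //.
rewrite addrAC addrK subrr mul0mx mulmx0.
by apply: posdef_block_diag => //; apply: posdef_scale.
Qed.
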